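(* Let $n=2m>2$ and let $(A;B)\in GS(n)$ be Golay sequences. Then $(A;A;B;B)$ and $(B;B;A;A)$ belong to $NS(n)$, and they are equivalent (with respect to the equivalence relation on $NS(n)$ generated by the elementary transformations (E1)–(E5)) if and only if $B^*\in\{A,-A,A',-A'\}$.
   Context: A binary sequence is a finite sequence $A=a_1,\dots,a_n$ with $a_i\in\{\pm1\}$. Its nonperiodic autocorrelation function is $N_A(i)=\sum_{j\in\mathbb Z}a_ja_{i+j}$, where $a_k=0$ for $k<1$ or $k>n$. For binary sequences: $-A=-a_1,\dots,-a_n$, $A'=a_n,\dots,a_1$, $A^*=a_1,-a_2,a_3,\dots,(-1)^{n-1}a_n$. Golay sequences $GS(n)$: pairs $(A;B)$ of binary sequences of length $n$ with $N_A(i)+N_B(i)=0$ for all $i\ne0$. Normal sequences $NS(n)$: quadruples $(A;A;C;D)$ of binary sequences of length $n$ with $2N_A(i)+N_C(i)+N_D(i)=0$ for all $i\neq0$. Encoding: write $n=2m$ (even case). The $i$-th quad ($1\le i\le m$) of a pair $(X;Y)$ of length-$n$ sequences is $\begin{bmatrix} x_i & x_{n+1-i}\\ y_i & y_{n+1-i}\end{bmatrix}$; quads are labelled (rows as pairs) $1=[(+,+),(+,+)]$, $2=[(+,+),(-,-)]$, $3=[(-,+),(-,+)]$, $4=[(+,-),(-,+)]$, $5=[(-,+),(+,-)]$, $6=[(+,-),(+,-)]$, $7=[(-,-),(+,+)]$, $8=[(-,-),(-,-)]$. Elementary transformations of $(A;A;C;D)\in NS(n)$: (E1) replace both copies of $A$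 by $-A$, or $C$ by $-C$, or $D$ by $-D$; (E2) replace both copies of $A$ by $A'$, or $C$ by $C'$, or $D$ by $D'$; (E3) interchange $C$ and $D$; (E4) replace $(C;D)$ by the pair obtained by replacing, for every $i$ whose $i$-th quad of $(C;D)$ has label $4$, that quad by the quad labelled $5$, and vice versa (all other quads unchanged); this yields an element of $NS(n)$; (E5) replace $(A;A;C;D)$ by $(A^*;A^*;C^*;D^* )$. Two members of $NS(n)$ are equivalent if one is obtained from the other by a finite sequence of elementary transformations. *)

(* Sequences are 0-indexed: a_1..a_n of the paper is A`_0..A`_(n-1). *)
From HB Require Import structures.
From mathcomp Require Import all_boot all_order all_algebra.
From Stdlib Require Import Relation_Operators.
Set Implicit Arguments. Unset Strict Implicit. Unset Printing Implicit Defensive.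
Import Order.TTheory GRing.Theory Num.Theory.
Local Open Scope ring_scope.

Definition binseq (n : nat) (A : seq int) : bool :=
  (size A == n) && all (fun x => (x == 1) || (x == -1)) A.

Definition entry (A : seq int) (k : int) : int :=
  match k with Posz m => nth 0 A m | Negz _ => 0 end.

Definition acf (A : seq int) (i : int) : int :=
  \sum_(j < size A) A`_j * entry A (j%:Z + i).

Definition is_GS (n : nat) (A B : seq int) : Prop :=
  binseq n A /\ binseq n B /\ (forall i : int, i != 0 -> acf A i + acf B i = 0).

Definition quad := (seq int * seq int * seq int * seq int)%type.

Definition is_NS (n : nat) (q : quad) : Prop :=
  let: (A1, A2, C, D) := q in
  [/\ binseq n A1, A1 = A2, binseq n C, binseq n D &
      forall i : int, i != 0 -> 2 * acf A1 i + acf C i + acf D i = 0].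

Definition negs (A : seq int) : seq int := map (fun x => - x) A.
Definition star (A : seq int) : seq int :=
  mkseq (fun j => (-1) ^+ j * A`_j) (size A).

(* Quad labels 4 and 5 (entries x_i, x_{n+1-i}, y_i, y_{n+1-i}). *)
Definition q4 : int * int * int * int := (1, -1, -1, 1).
Definition q5 : int * int * int * int := (-1, 1, 1, -1).
Definition swap45 (q : int * int * int * int) : int * int * int * int :=
  if q == q4 then q5 else if q == q5 then q4 else q.

(* (E4): for n = 2m, the pair obtained from (C;D) by exchanging quads with
   labels 4 and 5.  Quad k (0-indexed, k < m) is (c_k, c_{n-1-k}, d_k, d_{n-1-k}). *)
Definition quad_at (C D : seq int) (k : nat) : int * int * int * int :=
  let n := size C in (C`_k, C`_(n.-1 - k)%N, D`_k, D`_(n.-1 - k)%N).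

Definition E4 (C D : seq int) : seq int * seq int :=
  let n := size C in
  let newq j := swap45 (quad_at C D (minn j (n.-1 - j)%N)) in
  (mkseq (fun j => let: (x1, x2, _, _) := newq j in
                   if (j <= n.-1 - j)%N then x1 else x2) n,
   mkseq (fun j => let: (_, _, y1, y2) := newq j in
                   if (j <= n.-1 - j)%N then y1 else y2) n).

Inductive elem_step : quad -> quad -> Prop :=
  | E1a A1 A2 C D : elem_step (A1, A2, C, D) (negs A1, negs A2, C, D)
  | E1c A1 A2 C D : elem_step (A1, A2, C, D) (A1, A2, negs C, D)
  | E1d A1 A2 C D : elem_step (A1, A2, C, D) (A1, A2, C, negs D)
  | E2a A1 A2 C D : elem_step (A1, A2, C, D) (rev A1, rev A2, C, D)
  | E2c A1 A2 C D : elem_step (A1, A2, C, D) (A1, A2, rev C, D)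
  | E2d A1 A2 C D : elem_step (A1, A2, C, D) (A1, A2, C, rev D)
  | E3 A1 A2 C D : elem_step (A1, A2, C, D) (A1, A2, D, C)
  | E4s A1 A2 C D : elem_step (A1, A2, C, D) (A1, A2, (E4 C D).1, (E4 C D).2)
  | E5 A1 A2 C D : elem_step (A1, A2, C, D) (star A1, star A2, star C, star D).

Definition ns_equiv (q1 q2 : quad) : Prop :=
  clos_refl_trans quad elem_step q1 q2 \/ clos_refl_trans quad elem_step q2 q1.

(* The group generated by negation, reversal and alternation [star] acts on
   binary sequences of even length as an 8-element group, and every
   elementary transformation moves the first component of a quadruple inside
   its orbit.  So if (A;A;B;B) and (B;B;A;A) are equivalent, B is the image of
   A under some element of this group.  Golay sequences rule out the elements
   not involving [star]: they preserve the product a_1 a_n of the end entries,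
   which is N_A(n-1), so N_A(n-1) + N_B(n-1) = 2 a_1 a_n would vanish.
   Conversely, when B^* is one of ±A, ±A', applying (E5) and then undoing
   the resulting signs and reversals with (E1)-(E2) swaps the two pairs. *)
From mathcomp Require Import all_boot all_order all_algebra.
From mathcomp Require Import zify.
From Stdlib Require Import Relation_Operators.
Set Implicit Arguments. Unset Strict Implicit. Unset Printing Implicit Defensive.
Import Order.TTheory GRing.Theory Num.Theory.
Local Open Scope ring_scope.

Lemma size_negs X : size (negs X) = size X.
Proof. exact: size_map. Qed.

Lemma size_star X : size (star X) = size X.
Proof. exact: size_mkseq. Qed.

Lemma nth_negs X j : (negs X)`_j = - X`_j.
Proof.
have [ltjX | ?] := ltnP j (size X); first by rewrite (nth_map 0).
by rewrite !nth_default ?size_negs ?oppr0.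
Qed.

Lemma nth_star X j : (j < size X)%N -> (star X)`_j = (-1) ^+ j * X`_j.
Proof. exact: nth_mkseq. Qed.

Lemma negsK : involutive negs.
Proof. by move=> X; rewrite /negs -map_comp map_id_in // => x _ /=; rewrite opprK. Qed.

Lemma rev_negs X : rev (negs X) = negs (rev X).
Proof. by rewrite /negs map_rev. Qed.

Lemma star_negs X : star (negs X) = negs (star X).
Proof.
apply: (@eq_from_nth _ 0) => [|j]; rewrite ?size_negs !size_star ?size_negs // => ltjX.
by rewrite nth_negs !nth_star ?size_negs // nth_negs mulrN.
Qed.

Lemma starK : involutive star.
Proof.
move=> X; apply: (@eq_from_nth _ 0) => [|j]; rewrite !size_star // => ltjX.
by rewrite !nth_star ?size_star // mulrA -expr2 -exprM mulnC exprM sqrrN !expr1n mul1r.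
Qed.

(* For even n the sign (-1)^j of position j flips under j |-> n-1-j. *)
Lemma star_rev X : ~~ odd (size X) -> star (rev X) = negs (rev (star X)).
Proof.
move=> evenX; apply: (@eq_from_nth _ 0) => [|j].
  by rewrite size_negs !size_rev !size_star size_rev.
rewrite size_star size_rev => ltjX.
have ltjX' : (size X - j.+1 < size X)%N by rewrite ltn_subrL; apply: leq_ltn_trans ltjX.
rewrite nth_star ?size_rev // nth_negs !nth_rev ?size_star // nth_star // -mulNr.
congr (_ * _); rewrite -signr_odd -(signr_odd _ (size X - j.+1)) oddB //.
by rewrite (negbTE evenX) /=; case: (odd j); rewrite ?expr1 ?expr0 ?opprK.
Qed.

Definition sym (s r t : bool) (X : seq int) : seq int :=
  (if s then negs else id) ((if r then rev else id) ((if t then star else id) X)).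

Definition sym_orbit (A X : seq int) : Prop := exists s r t, X = sym s r t A.

Lemma negs_sym s r t X : negs (sym s r t X) = sym (~~ s) r t X.
Proof. by case: s => //=; rewrite negsK. Qed.

Lemma rev_sym s r t X : rev (sym s r t X) = sym s (~~ r) t X.
Proof. by case: s; case: r => //=; rewrite ?rev_negs ?revK. Qed.

Lemma star_sym s r t X : ~~ odd (size X) -> star (sym s r t X) = sym (s (+) r) r (~~ t) X.
Proof.
move=> evenX; have evenX' : ~~ odd (size (star X)) by rewrite size_star.
by case: s; case: r; case: t; rewrite /= ?star_negs ?star_rev ?starK ?negsK.
Qed.

Lemma symK s r : involutive (sym s r false).
Proof. by move=> X; case: s; case: r; rewrite /= ?rev_negs ?negsK ?revK. Qed.

Lemma sym_listP X A :
  reflect (exists s r, X = sym s r false A) (X \in [:: A; negs A; rev A; negs (rev A)]).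
Proof.
apply: (iffP idP) => [|[s [r ->]]]; last by case: s; case: r; rewrite !inE eqxx ?orbT.
by rewrite !inE => /or4P[] /eqP ->; [exists false, false | exists true, false
                                    | exists false, true | exists true, true].
Qed.

Notation reach := (clos_refl_trans quad elem_step).

Lemma elem_step_orbit A q1 q2 : ~~ odd (size A) -> elem_step q1 q2 ->
  sym_orbit A q1.1.1.1 -> sym_orbit A q2.1.1.1.
Proof.
move=> evenA [] A1 A2 C D /= [s [r [t ->]]]; try by exists s, r, t.
- by exists (~~ s), r, t; rewrite negs_sym.
- by exists s, (~~ r), t; rewrite rev_sym.
- by exists (s (+) r), r, (~~ t); rewrite star_sym.
Qed.

Lemma reach_orbit A q1 q2 : ~~ odd (size A) -> reach q1 q2 ->
  sym_orbit A q1.1.1.1 -> sym_orbit A q2.1.1.1.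
Proof.
move=> evenA; elim=> [x y|x|x y z _ IHxy _ IHyz] //; last by move/IHxy/IHyz.
exact: elem_step_orbit.
Qed.

Lemma reach_sym_pair s r X C D :
  reach (X, X, C, D) (sym s r false X, sym s r false X, C, D).
Proof.
apply: (@rt_trans _ _ _ ((if r then rev else id) X, (if r then rev else id) X, C, D)).
  by case: r; [apply/rt_step/E2a | apply: rt_refl].
by case: s; [apply/rt_step/E1a | apply: rt_refl].
Qed.

Lemma reach_unsym_C s r X1 X2 C D : reach (X1, X2, sym s r false C, D) (X1, X2, C, D).
Proof.
rewrite -{2}[C](symK s r); move: (sym s r false C) => C'.
apply: (@rt_trans _ _ _ (X1, X2, (if r then rev else id) C', D)).
  by case: r; [apply/rt_step/E2c | apply: rt_refl].
by case: s; [apply/rt_step/E1c | apply: rt_refl].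
Qed.

Lemma reach_unsym_D s r X1 X2 C D : reach (X1, X2, C, sym s r false D) (X1, X2, C, D).
Proof.
rewrite -{2}[D](symK s r); move: (sym s r false D) => D'.
apply: (@rt_trans _ _ _ (X1, X2, C, (if r then rev else id) D')).
  by case: r; [apply/rt_step/E2d | apply: rt_refl].
by case: s; [apply/rt_step/E1d | apply: rt_refl].
Qed.

Lemma acf_last X k : size X = k.+1 -> acf X k = X`_0 * X`_k.
Proof.
move=> sizeX; rewrite /acf sizeX big_ord_recl /= big1 ?addr0 => [|j _].
  by rewrite add0n.
by rewrite [X`_(_ + k)]nth_default ?mulr0 // sizeX /bump add1n addSn ltnS leq_addl.
Qed.

Lemma sym_ends s r X k : size X = k.+1 ->
  (sym s r false X)`_0 * (sym s r false X)`_k = X`_0 * X`_k.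
Proof.
move=> sizeX; have rev_ends : (rev X)`_0 * (rev X)`_k = X`_0 * X`_k.
  by rewrite !nth_rev ?sizeX // subSS subn0 subnn mulrC.
by case: s; case: r; rewrite /= ?nth_negs ?mulrNN.
Qed.

Lemma binseq_nth n X j : binseq n X -> (j < n)%N -> (X`_j == 1) || (X`_j == -1).
Proof. by case/andP => /eqP sizeX /(all_nthP 0) allX ltjn; apply: allX; rewrite sizeX. Qed.

Lemma binseq_nth_neq0 n X j : binseq n X -> (j < n)%N -> X`_j != 0.
Proof. by move/binseq_nth=> X01 /X01 /orP[] /eqP ->. Qed.

Lemma GS_sym_neq n A B s r : (1 < n)%N -> is_GS n A B -> B <> sym s r false A.
Proof.
case: n => // k lt1n [binA [binB GS]] defB.
have sizeA : size A = k.+1 by case/andP: binA => /eqP.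
have sizeB : size B = k.+1 by case/andP: binB => /eqP.
have := GS k%:Z; rewrite eqz_nat -lt0n -ltnS => /(_ lt1n) /eqP.
rewrite !acf_last // defB sym_ends //; apply/negP.
by rewrite -mulr2n -mulr_natl !mulf_neq0 //; apply: (binseq_nth_neq0 binA).
Qed.

Lemma is_GS_sym n A B : is_GS n A B -> is_GS n B A.
Proof. by case=> binA [binB GS]; do 2!split=> //; move=> i /GS; rewrite addrC. Qed.

Lemma GS_NS n A B : is_GS n A B -> is_NS n (A, A, B, B).
Proof. by case=> binA [binB GS]; split=> // i /GS; lia. Qed.

Section GolayEquivalence.

Variables (n : nat) (A B : seq int).
Hypotheses (evenn : ~~ odd n) (lt1n : (1 < n)%N) (GSAB : is_GS n A B).

Let evenA : ~~ odd (size A). Proof. by case: GSAB => /andP[/eqP ->]. Qed.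
Let evenB : ~~ odd (size B). Proof. by case: GSAB => _ [/andP[/eqP ->]]. Qed.

Lemma reach_GS_star : reach (A, A, B, B) (B, B, A, A) ->
  exists s r, star B = sym s r false A.
Proof.
move=> AB; have [s [r [[] defB]]] : sym_orbit A B.
- by apply: (reach_orbit evenA AB); exists false, false, false.
- by exists (s (+) r), r; rewrite defB star_sym.
- by have := GS_sym_neq lt1n GSAB defB.
Qed.

Lemma reach_GS_star_sym : reach (B, B, A, A) (A, A, B, B) ->
  exists s r, star B = sym s r false A.
Proof.
move=> BA; have [s [r [[] defA]]] : sym_orbit B A.
- by apply: (reach_orbit evenB BA); exists false, false, false.
- by exists s, r; rewrite defA symK.
- by have := GS_sym_neq lt1n (is_GS_sym GSAB) defA.
Qed.

Lemma star_GS_reach s r : star B = sym s r false A -> reach (A, A, B, B) (B, B, A, A).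
Proof.
move=> defB; have defB' : B = sym (s (+) r) r false (star A).
  by rewrite -[B]starK defB star_sym.
apply: (@rt_trans _ _ _ (star A, star A, star B, star B)); first exact/rt_step/E5.
rewrite defB defB'; apply: (rt_trans _ _ _ _ _ (reach_sym_pair _ _ _ _ _)).
exact: (rt_trans _ _ _ _ _ (reach_unsym_C _ _ _ _ _ _) (reach_unsym_D _ _ _ _ _ _)).
Qed.

End GolayEquivalence.

Theorem mainTheorem3 (n m : nat) (A B : seq int) :
  n = (2 * m)%N -> (2 < n)%N -> is_GS n A B ->
  [/\ is_NS n (A, A, B, B), is_NS n (B, B, A, A) &
      (ns_equiv (A, A, B, B) (B, B, A, A) <->
       star B \in [:: A; negs A; rev A; negs (rev A)])].
Proof.
move=> defn lt2n GSAB; have evenn : ~~ odd n by rewrite defn mul2n odd_double.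
have lt1n : (1 < n)%N by apply: ltnW.
split; [exact: GS_NS | exact/GS_NS/is_GS_sym | split=> [equivAB | /sym_listP[s [r defB]]]].
- apply/sym_listP; case: equivAB.
  + exact: reach_GS_star evenn lt1n GSAB.
  + exact: reach_GS_star_sym evenn lt1n GSAB.
- by left; apply: star_GS_reach evenn GSAB _ _ defB.
Qed.
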